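(* Let $X$ and $Y$ be bounded degree graphs with $X$ amenable, and let $f\colon X\to Y$ be a quasi-isometry. If $f$ is both quasi-$k$-to-one and quasi-$k'$-to-one for some $k,k'>0$, then $k=k'$.
   Context: Graphs carry their path metric. For $A\subset Y$, $\partial_Y A$ is the set of vertices of $Y\setminus A$ adjacent to some vertex of $A$. For $k>0$, a quasi-isometry $f\colon X\to Y$ is quasi-$k$-to-one if there is $C>0$ with $\bigl|k|A|-|f^{-1}(A)|\bigr|\le C|\partial_Y A|$ for every finite $A\subset Y$. A bounded degree graph is amenable if it admits a Følner sequence, i.e. finite sets $F_n$ with $|\partial F_n|/|F_n|\to0$. *)

From Stdlib Require Import Reals Lra List.
Import ListNotations.
Open Scope R_scope.

Section Graphs.
Context {T : Type} (adj : T -> T -> Prop).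

Inductive walk : T -> T -> nat -> Prop :=
| walk0 x : walk x x 0
| walkS x y z n : adj x y -> walk y z n -> walk x z (S n).

Definition is_dist (x y : T) (n : nat) : Prop :=
  walk x y n /\ forall m, walk x y m -> (n <= m)%nat.

(* a (connected, simple) graph, so that the path metric is a genuine metric *)
Definition is_graph : Prop :=
  (forall x y, adj x y -> adj y x) /\ (forall x, ~ adj x x) /\
  (forall x y, exists n, walk x y n).

Definition bounded_degree : Prop :=
  exists D : nat, forall x, exists l : list T,
    (length l <= D)%nat /\ forall y, adj x y -> In y l.

Definition has_card (P : T -> Prop) (n : nat) : Prop :=
  exists l : list T, NoDup l /\ length l = n /\ forall x, In x l <-> P x.

Definition vboundary (A : list T) : T -> Prop :=
  fun y => ~ In y A /\ exists a, In a A /\ adj a y.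

Definition amenable : Prop :=
  exists (F : nat -> list T) (b : nat -> nat),
    (forall n, NoDup (F n) /\ F n <> []) /\
    (forall n, has_card (vboundary (F n)) (b n)) /\
    Un_cv (fun n => INR (b n) / INR (length (F n))) 0.
End Graphs.

Definition quasi_isometry {X Y : Type} (adjX : X -> X -> Prop)
  (adjY : Y -> Y -> Prop) (f : X -> Y) : Prop :=
  exists K C : R, 1 <= K /\ 0 <= C /\
    (forall x x' n m, is_dist adjX x x' n -> is_dist adjY (f x) (f x') m ->
       INR n / K - C <= INR m /\ INR m <= K * INR n + C) /\
    (forall y, exists x n, is_dist adjY (f x) y n /\ INR n <= C).

Definition quasi_k_to_one {X Y : Type} (adjX : X -> X -> Prop)
  (adjY : Y -> Y -> Prop) (f : X -> Y) (k : R) : Prop :=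
  exists C : R, 0 < C /\
    forall (A : list Y) (m b : nat), NoDup A ->
      has_card (fun x => In (f x) A) m ->
      has_card (vboundary adjY A) b ->
      Rabs (k * INR (length A) - INR m) <= C * INR b.

From Stdlib Require Import Reals Lra Lia List Classical Wf_nat.
Import ListNotations.
Open Scope R_scope.

(* Thicken a finite set F of X to the R-neighbourhood A of f(F), where every vertex of Y
   lies within R of the image of f.  As f is a quasi-isometry between bounded degree
   graphs, the preimage of A contains F and |∂A| <= B |∂F| for a constant B.  The two
   quasi-k-to-one estimates for A give |k - k'| |A| <= (C + C') |∂A| and
   |F| <= k |A| + C |∂A|, hence |k - k'| |F| <= M |∂F| for a constant M, which a Følner
   sequence forces to mean k = k'. *)

Section Walks.
Context {T : Type} (adj : T -> T -> Prop).

Lemma walk_app x y z n m : walk adj x y n -> walk adj y z m -> walk adj x z (n + m).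
Proof. induction 1; intros Hw; simpl; [exact Hw | econstructor; eauto]. Qed.

Lemma walk_sym : (forall x y, adj x y -> adj y x) ->
  forall x y n, walk adj x y n -> walk adj y x n.
Proof.
  intros Hsym x y n Hw; induction Hw as [x|x y z n Hxy _ IH]; [constructor|].
  replace (S n) with (n + 1)%nat by lia.
  eapply walk_app; [exact IH|]. econstructor; [apply Hsym, Hxy | constructor].
Qed.

Definition near (x y : T) (r : nat) : Prop := exists n, (n <= r)%nat /\ walk adj x y n.

Lemma near_refl x r : near x x r.
Proof. exists 0%nat; split; [lia | constructor]. Qed.

Lemma near_adj x y : adj x y -> near x y 1.
Proof. intros Hxy; exists 1%nat; split; [lia | econstructor; [exact Hxy | constructor]]. Qed.

Lemma near_trans x y z r s : near x y r -> near y z s -> near x z (r + s).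
Proof.
  intros [n [Hn Hw]] [m [Hm Hw']]; exists (n + m)%nat.
  split; [lia | eapply walk_app; eauto].
Qed.

Lemma near_sym : (forall x y, adj x y -> adj y x) ->
  forall x y r, near x y r -> near y x r.
Proof. intros Hsym x y r [n [Hn Hw]]; exists n; split; [exact Hn | apply walk_sym; auto]. Qed.

Lemma is_dist_exists x y n : walk adj x y n -> exists d, is_dist adj x y d /\ (d <= n)%nat.
Proof.
  intros Hw.
  destruct (dec_inh_nat_subset_has_unique_least_element (walk adj x y))
    as [d [[Hd Hmin] _]]; [intros m; apply classic | eauto |].
  exists d; split; [split; [exact Hd | exact Hmin] | apply Hmin, Hw].
Qed.

Lemma near_exits_through_boundary (F : list T) u v r :
  near u v r -> In u F -> ~ In v F -> exists z, vboundary adj F z /\ near z v r.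
Proof.
  intros [n [Hn Hw]]; revert r Hn.
  induction Hw as [x|x y z n Hxy Hw IH]; intros r Hn Hu Hv; [contradiction|].
  destruct (classic (In y F)) as [Hy|Hy].
  - apply (IH r); [lia | exact Hy | exact Hv].
  - exists y; split; [split; [exact Hy | exists x; auto] | exists n; split; [lia | exact Hw]].
Qed.

End Walks.

Lemma bounded_covers_union {A B : Type} (l : list A) (Q : A -> B -> Prop) (beta : nat) :
  (forall a, In a l -> exists la, (length la <= beta)%nat /\ forall y, Q a y -> In y la) ->
  exists L, (length L <= beta * length l)%nat /\ forall a y, In a l -> Q a y -> In y L.
Proof.
  induction l as [|a l IH]; intros Hcov.
  - exists []; split; [simpl; lia | intros a y []].
  - destruct IH as [L [HL HinL]]; [intros a' Ha'; apply Hcov; simpl; auto|].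
    destruct (Hcov a) as [la [Hla Hinla]]; [simpl; auto|].
    exists (la ++ L); split; [rewrite length_app; simpl; nia|].
    intros a' y [<-|Ha'] Hq; apply in_or_app; [left | right]; eauto.
Qed.

Lemma has_card_sub_list {T : Type} (l : list T) (P : T -> Prop) :
  (forall x, P x -> In x l) -> exists n, has_card P n /\ (n <= length l)%nat.
Proof.
  revert P; induction l as [|a l IH]; intros P HP.
  - exists 0%nat; split; [|simpl; lia].
    exists []; split; [constructor | split; [reflexivity | intros x; split; [intros [] | intros Hx; apply (HP x Hx)]]].
  - destruct (IH (fun x => P x /\ x <> a)) as [n [[l' [Hnd [Hlen Hiff]]] Hle]].
    { intros x [Hx Hne]; destruct (HP x Hx) as [->|]; [congruence | assumption]. }
    destruct (classic (P a)) as [Pa|nPa].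
    + exists (S n); split; [|simpl; lia]. exists (a :: l'); split.
      { constructor; [intros Hin; apply Hiff in Hin; tauto | exact Hnd]. }
      split; [simpl; lia|]. intros x; simpl; split.
      * intros [<-|Hin]; [exact Pa | apply Hiff in Hin; tauto].
      * intros Px; destruct (classic (x = a)) as [->|Hne]; [left; reflexivity | right; apply Hiff; auto].
    + exists n; split; [|simpl; lia]. exists l'; split; [exact Hnd | split; [exact Hlen|]].
      intros x; split; [intros Hin; apply Hiff in Hin; tauto|].
      intros Px; apply Hiff; split; [exact Px | intros ->; contradiction].
Qed.

Lemma bounded_degree_balls {T : Type} (adj : T -> T -> Prop) : bounded_degree adj ->
  forall r, exists B, forall x, exists l, (length l <= B)%nat /\ forall y, near adj x y r -> In y l.
Proof.
  intros [D HD] r; induction r as [|r [B HB]].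
  - exists 1%nat; intros x; exists [x]; split; [simpl; lia|].
    intros y [n [Hn Hw]]; replace n with 0%nat in Hw by lia.
    inversion Hw; subst; simpl; auto.
  - exists (B * S D)%nat; intros x. destruct (HD x) as [N [HN HinN]].
    destruct (bounded_covers_union (x :: N) (fun w y => near adj w y r) B) as [L [HL HinL]];
      [intros a _; apply HB|].
    exists L; split; [simpl in HL; nia|].
    intros y [n [Hn Hw]]; inversion Hw as [|? x' ? n' Hxx' Hw']; subst.
    + apply (HinL y); [simpl; auto | apply near_refl].
    + apply (HinL x'); [simpl; auto | exists n'; split; [lia | exact Hw']].
Qed.

Lemma multiplicity_gap_bound (k k' C1 C2 a m bA p : R) : 0 <= k ->
  Rabs (k * a - m) <= C1 * bA -> Rabs (k' * a - m) <= C2 * bA -> p <= m -> 0 <= a ->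
  Rabs (k - k') * p <= (k * (C1 + C2) + Rabs (k - k') * C1) * bA.
Proof.
  intros Hk Hq1 Hq2 Hpm Ha.
  assert (Hgap : Rabs (k - k') * a <= (C1 + C2) * bA).
  { rewrite <- (Rabs_pos_eq a Ha), <- Rabs_mult.
    replace ((k - k') * a) with ((k * a - m) - (k' * a - m)) by ring.
    eapply Rle_trans; [apply Rabs_triang|]; rewrite Rabs_Ropp; lra. }
  assert (Hm : m <= k * a + C1 * bA).
  { pose proof (Rle_abs (- (k * a - m))) as Habs; rewrite Rabs_Ropp in Habs; lra. }
  pose proof (Rabs_pos (k - k')).
  nra.
Qed.

Lemma nat_above (r : R) : exists N : nat, r <= INR N.
Proof. destruct (INR_unbounded r) as [n Hn]; exists n; lra. Qed.

Section QuasiIsometry.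
Context {X Y : Type} (adjX : X -> X -> Prop) (adjY : Y -> Y -> Prop) (f : X -> Y).
Hypothesis connX : forall x x', exists n, walk adjX x x' n.
Hypothesis connY : forall y y', exists n, walk adjY y y' n.
Hypothesis qi : quasi_isometry adjX adjY f.

Lemma qi_coarse_lipschitz r :
  exists s, forall x x', near adjX x x' r -> near adjY (f x) (f x') s.
Proof.
  destruct qi as [K [C [HK [HC [Hdist _]]]]].
  destruct (nat_above (K * INR r + C)) as [s Hs]; exists s.
  intros x x' [n [Hn Hw]].
  destruct (is_dist_exists _ _ _ _ Hw) as [n0 [Hd0 Hn0]].
  destruct (connY (f x) (f x')) as [m Hm].
  destruct (is_dist_exists _ _ _ _ Hm) as [m0 [Hdm _]].
  destruct (Hdist _ _ _ _ Hd0 Hdm) as [_ Hup].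
  exists m0; split; [|apply Hdm].
  apply INR_le; apply le_INR in Hn0, Hn; nra.
Qed.

Lemma qi_coarse_expansive r :
  exists s, forall x x', near adjY (f x) (f x') r -> near adjX x x' s.
Proof.
  destruct qi as [K [C [HK [HC [Hdist _]]]]].
  destruct (nat_above (K * (INR r + C))) as [s Hs]; exists s.
  intros x x' [m [Hm Hw]].
  destruct (is_dist_exists _ _ _ _ Hw) as [m0 [Hdm Hm0]].
  destruct (connX x x') as [n Hn].
  destruct (is_dist_exists _ _ _ _ Hn) as [n0 [Hdn _]].
  destruct (Hdist _ _ _ _ Hdn Hdm) as [Hlo _].
  exists n0; split; [|apply Hdn].
  assert (Hn0 : INR n0 = K * (INR n0 / K)) by (field; lra).
  apply INR_le; apply le_INR in Hm0, Hm; nra.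
Qed.

Lemma qi_coarse_dense : exists R, forall y, exists x, near adjY (f x) y R.
Proof.
  destruct qi as [K [C [_ [_ [_ Hden]]]]].
  destruct (nat_above C) as [R HR]; exists R.
  intros y; destruct (Hden y) as [x [n [Hd Hn]]].
  exists x, n; split; [apply INR_le; lra | apply Hd].
Qed.

End QuasiIsometry.

Section Thickening.
Context {X Y : Type} (adjX : X -> X -> Prop) (adjY : Y -> Y -> Prop) (f : X -> Y).
Hypothesis symY : forall y y', adjY y y' -> adjY y' y.
Hypothesis bdX : bounded_degree adjX.
Hypothesis bdY : bounded_degree adjY.
Hypothesis lipschitz : forall r, exists s, forall x x', near adjX x x' r -> near adjY (f x) (f x') s.
Hypothesis expansive : forall r, exists s, forall x x', near adjY (f x) (f x') r -> near adjX x x' s.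
Variable R : nat.
Hypothesis dense : forall y, exists x, near adjY (f x) y R.

Definition thickening (F : list X) : Y -> Prop :=
  fun y => exists a, In a F /\ near adjY (f a) y R.

Lemma thickening_finite F : exists A : list Y, NoDup A /\ forall y, In y A <-> thickening F y.
Proof.
  destruct (bounded_degree_balls adjY bdY R) as [B HB].
  destruct (bounded_covers_union F (fun a y => near adjY (f a) y R) B) as [L [_ HL]];
    [intros a _; apply HB|].
  destruct (has_card_sub_list L (thickening F)) as [_ [[A [HA [_ HAiff]]] _]];
    [intros y [a [Ha Hy]]; eapply HL; eauto|].
  exists A; split; assumption.
Qed.

Lemma preimage_thickening_card F (A : list Y) :
  NoDup F -> (forall y, In y A <-> thickening F y) ->
  exists m, has_card (fun x => In (f x) A) m /\ (length F <= m)%nat.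
Proof.
  intros HF HA.
  destruct (expansive R) as [s Hs].
  destruct (bounded_degree_balls adjX bdX s) as [B HB].
  destruct (bounded_covers_union F (fun a x => near adjX a x s) B) as [L [_ HL]];
    [intros a _; apply HB|].
  destruct (has_card_sub_list L (fun x => In (f x) A)) as [m [Hm _]].
  { intros x Hx; apply HA in Hx; destruct Hx as [a [Ha Hax]]; eapply HL; eauto. }
  exists m; split; [exact Hm|].
  destruct Hm as [l [_ [<- Hliff]]].
  apply NoDup_incl_length; [exact HF|].
  intros a Ha; apply Hliff, HA; exists a; split; [exact Ha | apply near_refl].
Qed.

(* A boundary point [y] of the thickening is [R]-close to the image of some [x'] outside [F];
   pulling back a short path from [F] to [x'] locates a boundary point of [F] near [y]. *)
Lemma thickening_boundary_near : exists S, forall F (A : list Y),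
  (forall y, In y A <-> thickening F y) ->
  forall y, vboundary adjY A y -> exists z, vboundary adjX F z /\ near adjY (f z) y S.
Proof.
  destruct (expansive (R + 1 + R)) as [s Hs].
  destruct (lipschitz s) as [t Ht].
  exists (t + R)%nat; intros F A HA y [HyA [a' [Ha'A Hadj]]].
  apply HA in Ha'A; destruct Ha'A as [a [HaF Ha']].
  destruct (dense y) as [x' Hx'].
  assert (Hx'F : ~ In x' F) by (intros Hin; apply HyA, HA; exists x'; auto).
  assert (Hax' : near adjY (f a) (f x') (R + 1 + R)).
  { apply near_trans with y; [apply near_trans with a'; [exact Ha' | apply near_adj, Hadj]|].
    apply near_sym; assumption. }
  destruct (near_exits_through_boundary adjX F a x' s (Hs _ _ Hax') HaF Hx'F) as [z [Hz Hzx']].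
  exists z; split; [exact Hz|].
  apply near_trans with (f x'); [apply Ht, Hzx' | exact Hx'].
Qed.

Lemma thickening_boundary_card : exists B, forall F (A : list Y) b,
  (forall y, In y A <-> thickening F y) -> has_card (vboundary adjX F) b ->
  exists bA, has_card (vboundary adjY A) bA /\ (bA <= B * b)%nat.
Proof.
  destruct thickening_boundary_near as [S HS].
  destruct (bounded_degree_balls adjY bdY S) as [B HB].
  exists B; intros F A b HA [lb [_ [<- Hlb]]].
  destruct (bounded_covers_union lb (fun z y => near adjY (f z) y S) B) as [L [HLlen HL]];
    [intros z _; apply HB|].
  destruct (has_card_sub_list L (vboundary adjY A)) as [bA [HbA HbAle]].
  { intros y Hy; destruct (HS F A HA y Hy) as [z [Hz Hzy]]; eapply HL; [apply Hlb, Hz | exact Hzy]. }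
  exists bA; split; [exact HbA | lia].
Qed.

Lemma quasi_k_to_one_gap_isoperimetric k k' : 0 <= k ->
  quasi_k_to_one adjX adjY f k -> quasi_k_to_one adjX adjY f k' ->
  exists M, forall F b, NoDup F -> has_card (vboundary adjX F) b ->
    Rabs (k - k') * INR (length F) <= M * INR b.
Proof.
  intros Hk [C1 [HC1 Hq1]] [C2 [HC2 Hq2]].
  destruct thickening_boundary_card as [B HB].
  exists ((k * (C1 + C2) + Rabs (k - k') * C1) * INR B); intros F b HF Hb.
  destruct (thickening_finite F) as [A [HAnd HA]].
  destruct (preimage_thickening_card F A HF HA) as [m [Hm HFm]].
  destruct (HB F A b HA Hb) as [bA [HbA HbAle]].
  apply le_INR in HFm, HbAle; rewrite mult_INR in HbAle.
  eapply Rle_trans.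
  - apply (multiplicity_gap_bound k k' C1 C2 (INR (length A)) (INR m) (INR bA));
      auto using pos_INR; lra.
  - rewrite Rmult_assoc; apply Rmult_le_compat_l; [|exact HbAle].
    pose proof (Rabs_pos (k - k')); nra.
Qed.

End Thickening.

Lemma Un_cv_const (a : R) : Un_cv (fun _ => a) a.
Proof. intros e He; exists 0%nat; intros n _; unfold R_dist; rewrite Rminus_diag, Rabs_R0; exact He. Qed.

Lemma amenable_isoperimetric_const_nonpos {T : Type} (adj : T -> T -> Prop) (c M : R) :
  amenable adj ->
  (forall F b, NoDup F -> has_card (vboundary adj F) b -> c * INR (length F) <= M * INR b) ->
  c <= 0.
Proof.
  intros [F [b [HF [Hb Hcv]]]] Hiso.
  apply (@Rle_cv_lim (fun _ => c) (fun n => M * (INR (b n) / INR (length (F n)))));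
    [| apply Un_cv_const | replace 0 with (M * 0) by ring; apply CV_mult; [apply Un_cv_const | exact Hcv]].
  intros n; destruct (HF n) as [HFnd HFne].
  assert (HL : 0 < INR (length (F n))) by (apply lt_0_INR; destruct (F n); [congruence | simpl; lia]).
  apply Rmult_le_reg_r with (INR (length (F n))); [exact HL|].
  replace (M * (INR (b n) / INR (length (F n))) * INR (length (F n))) with (M * INR (b n))
    by (field; lra).
  exact (Hiso (F n) (b n) HFnd (Hb n)).
Qed.

Theorem lemma2p9 (X Y : Type) (adjX : X -> X -> Prop) (adjY : Y -> Y -> Prop)
  (f : X -> Y) (k k' : R) :
  is_graph adjX -> is_graph adjY ->
  bounded_degree adjX -> bounded_degree adjY ->
  amenable adjX ->
  quasi_isometry adjX adjY f ->
  0 < k -> 0 < k' ->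
  quasi_k_to_one adjX adjY f k -> quasi_k_to_one adjX adjY f k' ->
  k = k'.
Proof.
  intros [_ [_ connX]] [symY [_ connY]] bdX bdY Hamen Hqi Hk _ Hkk Hkk'.
  destruct (qi_coarse_dense adjX adjY f Hqi) as [R dense].
  destruct (quasi_k_to_one_gap_isoperimetric adjX adjY f symY bdX bdY
              (qi_coarse_lipschitz adjX adjY f connY Hqi)
              (qi_coarse_expansive adjX adjY f connX Hqi) R dense k k' (Rlt_le _ _ Hk) Hkk Hkk')
    as [M HM].
  pose proof (amenable_isoperimetric_const_nonpos adjX _ M Hamen HM) as Hgap.
  pose proof (Rabs_pos (k - k')).
  destruct (Req_dec k k') as [Heq|Hne]; [exact Heq | exfalso].
  apply (Rabs_no_R0 (k - k')); [intros Hz; apply Hne; lra | lra].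
Qed.
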